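(* Let $X$ be a topological space possessing an infinite metrizable gauge, let $\kappa$ be a regular cardinal with $\kappa\in\mathrm{MG}(X)$, let $G\in\mathcal{G}_\kappa$ and $d\in\mathrm{Met}(X;G)$. Let $\mathcal{F}$ be a Cauchy filter on $(X,d)$ and let $l\colon\kappa^\dagger\to G$ be a g-characteristic isotone embedding. Then there exists a map $\mathfrak{B}\colon\kappa\to\mathcal{F}$ such that: (1) each $\mathfrak{B}(\alpha)$ is a clopen subset of $X$; (2) for all $\alpha<\kappa$ and all $x,y\in\mathfrak{B}(\alpha)$ we have $d(x,y)\le l(\alpha)$; (3) if $\alpha\le\beta<\kappa$ then $\mathfrak{B}(\alpha)\supseteq\mathfrak{B}(\beta)$.
   Context: A linearly ordered Abelian group is an Abelian group with a linear order compatible with addition. For $x,y\in G_{>0}$, $x\asymp y$ iff $y\le nx$ and $x\le my$ for some $n,m\in\mathbb{Z}_{\ge1}$; $\mathrm{Arc}(G)=G_{>0}/\asymp$, ordered by $[x]\preceq[y]$ iff ($nx<y$ for all $n$) or $x\asymp y$; $\mathrm{Arc}(G)^\perp$ is $\mathrm{Arc}(G)$ with a new least element adjoined. For a bottomed linearly ordered set $S$ (least element $\perp_S$, $S^*=S\setminus\{\perp_S\}$), $\chi(S)$ is the least cardinal $\kappa>0$ such that some strictly decreasing family $(s_\alpha)_{\alpha<\kappa}$ in $S^*$ has every $t\in S^*$ bounded below by some $s_\alpha$. A $G$-metric: $d\colon X^2\to G$, $d(x,y)=0\iff x=y$, $d\ge0$, symmetric, triangle inequality; $\mathrm{Met}(X;G)$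 is the set of $G$-metrics generating the topology of $X$ via open balls of radii in $G_{>0}$. $\mathrm{MG}(X)$: cardinals $\kappa$ with some $G$, $\chi(\mathrm{Arc}(G)^\perp)=\kappa$, $\mathrm{Met}(X;G)\ne\emptyset$; infinite metrizable gauge: some $\kappa\in\mathrm{MG}(X)$ with $\kappa\ge\omega_0$. $\mathcal{G}_\kappa$: groups with $\chi(\mathrm{Arc}(G)^\perp)=\kappa$. $\kappa^\dagger$ is the set $\kappa+1=\{\alpha:\alpha\le\kappa\}$ of ordinals with reversed order (least element $\kappa$). A map $l\colon\kappa^\dagger\to G$ is an isotone embedding if it is injective and order preserving for the order of $\kappa^\dagger$ (so $\alpha\le\beta$ as ordinals implies $l(\beta)\le l(\alpha)$); it is g-characteristic if its image $Q$ satisfies $Q\subseteq G_{\ge0}$, $0\in Q$, and every $s\in G_{>0}$ has some $t\in Q\setminus\{0\}$ with $t\le s$. A filter $\mathcal{F}$ on $X$ is Cauchy if for every $\epsilon\in G_{>0}$ some $F\in\mathcal F$ has $d(x,y)<\epsilon$ for all $x,y\in F$. *)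

From HB Require Import structures.
From mathcomp Require Import all_boot all_order all_algebra.
From mathcomp Require Import all_classical topology.
Set Implicit Arguments. Unset Strict Implicit. Unset Printing Implicit Defensive.
Import Order.TTheory GRing.Theory Num.Theory.
Local Open Scope classical_set_scope.
Local Open Scope ring_scope.

Definition is_loag (G : porderZmodType) : Prop :=
  (forall x y : G, (x <= y) || (y <= x)) /\
  (forall x y z : G, x <= y -> x + z <= y + z).

Definition arc_equiv (G : porderZmodType) (x y : G) : Prop :=
  exists n m : nat, (0 < n)%N /\ (0 < m)%N /\ y <= x *+ n /\ x <= y *+ m.

(* [x] ⪯ [y] in Arc(G) (for x, y in G_{>0}) *)
Definition arc_le (G : porderZmodType) (x y : G) : Prop :=
  (forall n : nat, (0 < n)%N -> x *+ n < y) \/ arc_equiv x y.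

Definition arc_lt (G : porderZmodType) (x y : G) : Prop :=
  arc_le x y /\ ~ arc_equiv x y.

Definition well_order (K : Type) (lt : K -> K -> Prop) : Prop :=
  (forall a, ~ lt a a) /\
  (forall a b c, lt a b -> lt b c -> lt a c) /\
  (forall a b, lt a b \/ a = b \/ lt b a) /\
  well_founded lt.

Definition card_le (A B : Type) : Prop := exists f : A -> B, injective f.

(* (K, lt) is an initial ordinal, i.e. (represents) a cardinal *)
Definition initial_ordinal (K : Type) (lt : K -> K -> Prop) : Prop :=
  well_order lt /\ forall a : K, ~ card_le K {b : K | lt b a}.

Definition infinite_type (K : Type) : Prop := card_le nat K.

Definition regular_cardinal (K : Type) (lt : K -> K -> Prop) : Prop :=
  initial_ordinal lt /\ infinite_type K /\
  forall C : K -> Prop, (forall a, exists b, C b /\ (a = b \/ lt a b)) ->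
    card_le K {b : K | C b}.

(* The elements of Arc(G)^⊥ \ {⊥} = Arc(G) are represented by elements of
   G_{>0}; a family indexed by the ordinal (J, ltJ) is strictly decreasing in
   Arc(G) and every element of Arc(G) is bounded below by a member. *)
Definition arc_coinitial_family (G : porderZmodType) (J : Type)
    (ltJ : J -> J -> Prop) (s : J -> G) : Prop :=
  (forall j, 0 < s j) /\
  (forall i j, ltJ i j -> arc_lt (s j) (s i)) /\
  (forall t : G, 0 < t -> exists j, arc_le (s j) t).

(* χ(Arc(G)^⊥) = κ, where κ is the cardinal represented by the initial
   ordinal (K, ltK): κ admits such a family, and no nonzero cardinal
   strictly smaller than κ does. *)
Definition chi_arc_eq (G : porderZmodType) (K : Type) (ltK : K -> K -> Prop)
  : Prop :=
  (exists s : K -> G, arc_coinitial_family ltK s) /\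
  forall (J : Type) (ltJ : J -> J -> Prop),
    initial_ordinal ltJ -> inhabited J -> card_le J K -> ~ card_le K J ->
    ~ (exists s : J -> G, arc_coinitial_family ltJ s).

Definition is_Gmetric (X : Type) (G : porderZmodType) (d : X -> X -> G)
  : Prop :=
  (forall x y, d x y = 0 <-> x = y) /\
  (forall x y, 0 <= d x y) /\
  (forall x y, d x y = d y x) /\
  (forall x y z, d x z <= d x y + d y z).

Definition in_Met (X : topologicalType) (G : porderZmodType)
    (d : X -> X -> G) : Prop :=
  is_Gmetric d /\
  forall U : set X, open U <->
    (forall x, U x -> exists e : G, 0 < e /\ [set y | d x y < e] `<=` U).

Definition in_MG (X : topologicalType) (K : Type) (ltK : K -> K -> Prop)
  : Prop :=
  exists G : porderZmodType, is_loag G /\ chi_arc_eq G ltK /\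
    exists d : X -> X -> G, in_Met d.

Definition has_infinite_metrizable_gauge (X : topologicalType) : Prop :=
  exists (K : Type) (ltK : K -> K -> Prop),
    initial_ordinal ltK /\ infinite_type K /\ in_MG X ltK.

Definition G_cauchy (X : Type) (G : porderZmodType) (d : X -> X -> G)
    (F : set_system X) : Prop :=
  forall e : G, 0 < e -> exists A, F A /\ forall x y, A x -> A y -> d x y < e.

(* Some a stands for the ordinal a < κ, None stands for κ itself.
   ord_le_dag a b  <->  a ≤ b as ordinals. *)
Definition ord_le_dag (K : Type) (ltK : K -> K -> Prop) (a b : option K)
  : Prop :=
  match a, b with
  | _, None => True
  | None, Some _ => False
  | Some a, Some b => a = b \/ ltK a b
  end.

(* isotone embedding κ^† -> G: injective and order preserving for the
   reversed order of κ^† *)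
Definition isotone_embedding (K : Type) (ltK : K -> K -> Prop)
    (G : porderZmodType) (l : option K -> G) : Prop :=
  injective l /\ forall a b, ord_le_dag ltK a b -> l b <= l a.

Definition g_characteristic (K : Type) (G : porderZmodType)
    (l : option K -> G) : Prop :=
  (forall a, 0 <= l a) /\
  (exists a, l a = 0) /\
  (forall s : G, 0 < s -> exists a, l a != 0 /\ l a <= s).

From HB Require Import structures.
From mathcomp Require Import all_boot all_order all_algebra.
From mathcomp Require Import all_classical topology.
Set Implicit Arguments. Unset Strict Implicit. Unset Printing Implicit Defensive.
Import Order.TTheory GRing.Theory Num.Theory.
Local Open Scope classical_set_scope.
Local Open Scope ring_scope.

(* Since κ is infinite, Arc(G) has no least element, so below every r > 0 lies
   an e > 0 with n e < r for all n.  Call x and y infinitely close at scale r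
   when n d(x, y) < r for all n: this is an equivalence relation whose classes
   contain the d-balls of radius e, hence are clopen.  Take 𝔅(α) to be the
   class at scale l(α) of a member of 𝓕 of diameter below such an e.  For
   α ≤ β the scale l(β) is finer than l(α), and 𝔅(α), 𝔅(β) meet because 𝓕 is
   proper, so 𝔅(β) ⊆ 𝔅(α). *)

Section LinearlyOrderedAbelianGroup.

Context {G : porderZmodType}.
Hypothesis hG : is_loag G.

Lemma loag_lerMn2r (x y : G) (n : nat) : x <= y -> x *+ n <= y *+ n.
Proof.
move=> xy; elim: n => [|n IH]; first by rewrite !mulr0n.
rewrite !mulrS; apply: le_trans (hG.2 _ _ (x *+ n) xy) _.
by rewrite ![y + _]addrC; apply: hG.2.
Qed.

Lemma loag_leNgt (x y : G) : ~ x < y -> y <= x.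
Proof.
move=> Nxy; case/orP: (hG.1 x y) => // xy; case: (eqVneq x y) => [->//|neq].
by exfalso; apply: Nxy; rewrite lt_def eq_sym neq xy.
Qed.

Lemma loag_ltNge (x y : G) : ~ x <= y -> y < x.
Proof.
move=> Nxy; have yx : y <= x by apply: loag_leNgt => /ltW.
rewrite lt_def yx andbT.
by apply/eqP=> eq_yx; apply: Nxy; rewrite eq_yx.
Qed.

Definition infinitely_smaller (e r : G) := forall n : nat, e *+ n < r.

Lemma infinitely_smaller0 (r : G) : 0 < r -> infinitely_smaller 0 r.
Proof. by move=> r0 n; rewrite mul0rn. Qed.

Lemma infinitely_smaller_le (x y r : G) :
  x <= y -> infinitely_smaller y r -> infinitely_smaller x r.
Proof. by move=> xy yr n; apply: le_lt_trans (yr n); apply: loag_lerMn2r. Qed.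

Lemma infinitely_smallerW (e r s : G) :
  r <= s -> infinitely_smaller e r -> infinitely_smaller e s.
Proof. by move=> rs er n; apply: lt_le_trans rs. Qed.

Lemma infinitely_smallerD (x y r : G) :
  infinitely_smaller x r -> infinitely_smaller y r ->
  infinitely_smaller (x + y) r.
Proof.
wlog xy : x y / x <= y => [hwlog|xr yr n].
  by case/orP: (hG.1 x y) => ? ? ?; [|rewrite addrC]; apply: hwlog.
apply: le_lt_trans (yr (n * 2)%N).
by rewrite mulnC mulrnA; apply: loag_lerMn2r; rewrite mulr2n; apply: hG.2.
Qed.

Lemma not_arc_le_infinitely_smaller (r t : G) :
  0 < r -> ~ arc_le r t -> infinitely_smaller t r.
Proof.
move=> r0 Nrt n; apply: contrapT => /loag_leNgt rtn.
have n0 : (0 < n)%N.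
  by case: n rtn => // /(lt_le_trans r0); rewrite mulr0n ltxx.
apply: (Nrt); left=> m m0; apply: loag_ltNge => trm.
by apply: Nrt; right; exists m, n.
Qed.

Lemma unit_initial_ordinal : initial_ordinal (fun _ _ : unit => False).
Proof.
split; last by move=> a [g _]; case: (g tt).
split; first by move=> a [].
split; first by move=> a b c [].
split; first by move=> [] []; right; left.
by move=> a; constructor.
Qed.

(* A single element cannot be coinitial in Arc(G) when χ(Arc(G)^⊥) is
   infinite, as then the singleton family would witness χ = 1. *)
Lemma exists_infinitely_smaller (K : Type) (ltK : K -> K -> Prop) (r : G) :
  chi_arc_eq G ltK -> infinite_type K -> 0 < r ->
  exists2 e, 0 < e & infinitely_smaller e r.
Proof.
move=> [_ chi_min] [f finj] r0.
have [[t [t0 Nrt]]|Nt] := pselect (exists t : G, 0 < t /\ ~ arc_le r t).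
  by exists t => //; apply: not_arc_le_infinitely_smaller.
exfalso; apply: (chi_min unit _ unit_initial_ordinal (inhabits tt)).
- by exists (fun _ => f 0%N) => [[] []].
- move=> [g ginj]; have f01 : f 0%N = f 1%N.
    by apply: ginj; case: (g (f 0%N)); case: (g (f 1%N)).
  by have := finj _ _ f01.
- exists (fun _ => r); do 2!split=> //.
  by move=> t t0; exists tt; apply: contrapT => Nrt; apply: Nt; exists t.
Qed.

End LinearlyOrderedAbelianGroup.

Section InfinitelyClose.

Context {X : topologicalType} {G : porderZmodType}.
Variable d : X -> X -> G.
Hypotheses (hG : is_loag G) (hd : in_Met d).
Hypothesis no_least_arc :
  forall r : G, 0 < r -> exists2 e, 0 < e & infinitely_smaller e r.

Let d_refl x : d x x = 0. Proof. exact: (proj2 (hd.1.1 x x)). Qed.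
Let d_sym x y : d x y = d y x. Proof. exact: hd.1.2.2.1. Qed.
Let d_tri x y z : d x z <= d x y + d y z. Proof. exact: hd.1.2.2.2. Qed.

Definition inf_close (r : G) (x y : X) := infinitely_smaller (d x y) r.

Definition inf_saturation (r : G) (A : set X) :=
  [set x | exists2 y, A y & inf_close r y x].

Definition inf_bounded (r : G) (A : set X) :=
  forall x y, A x -> A y -> inf_close r x y.

Lemma inf_close_refl r x : 0 < r -> inf_close r x x.
Proof. by rewrite /inf_close d_refl; apply: infinitely_smaller0. Qed.

Lemma inf_close_sym r x y : inf_close r x y -> inf_close r y x.
Proof. by rewrite /inf_close d_sym. Qed.

Lemma inf_close_trans r x y z :
  inf_close r x y -> inf_close r y z -> inf_close r x z.
Proof.
move=> xy yz; apply: (infinitely_smaller_le (r := r) hG (d_tri x y z)).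
exact: infinitely_smallerD.
Qed.

Lemma inf_close_lt r e x y :
  infinitely_smaller e r -> d x y < e -> inf_close r x y.
Proof.
by move=> er /ltW dxy; apply: (infinitely_smaller_le (r := r) hG dxy er).
Qed.

Lemma inf_close_le r x y : inf_close r x y -> d x y <= r.
Proof. by move=> xy; have := xy 1%N; rewrite mulr1n => /ltW. Qed.

Lemma inf_boundedW r s A : r <= s -> inf_bounded r A -> inf_bounded s A.
Proof.
by move=> rs Ar x y Ax Ay; apply: infinitely_smallerW rs (Ar x y Ax Ay).
Qed.

Lemma inf_bounded_lt r e A :
  infinitely_smaller e r -> (forall x y, A x -> A y -> d x y < e) ->
  inf_bounded r A.
Proof. by move=> er Ae x y Ax Ay; apply: inf_close_lt er (Ae x y Ax Ay). Qed.

Lemma sub_inf_saturation r A : 0 < r -> A `<=` inf_saturation r A.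
Proof. by move=> r0 x Ax; exists x => //; apply: inf_close_refl. Qed.

Lemma inf_bounded_saturation r A :
  inf_bounded r A -> inf_bounded r (inf_saturation r A).
Proof.
move=> Ar x y [x' Ax' x'x] [y' Ay' y'y].
apply: inf_close_trans (inf_close_sym x'x) _.
exact: inf_close_trans (Ar _ _ Ax' Ay') y'y.
Qed.

Lemma inf_saturation_sup r A B z :
  inf_bounded r B -> B z -> inf_saturation r A z -> B `<=` inf_saturation r A.
Proof.
move=> Br Bz [y Ay yz] x Bx; exists y => //.
exact: inf_close_trans yz (Br _ _ Bz Bx).
Qed.

Lemma open_inf_close_ball r x :
  0 < r -> exists e, 0 < e /\ [set y | d x y < e] `<=` inf_close r x.
Proof.
move=> /no_least_arc [e e0 er]; exists e; split=> // y.
exact: inf_close_lt er.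
Qed.

Lemma open_inf_saturation r A : 0 < r -> open (inf_saturation r A).
Proof.
move=> r0; apply/hd.2 => x [y Ay yx].
have [e [e0 ball_e]] := open_inf_close_ball x r0.
by exists e; split=> // z /ball_e xz; exists y => //; apply: inf_close_trans xz.
Qed.

Lemma closed_inf_saturation r A : 0 < r -> closed (inf_saturation r A).
Proof.
move=> r0; rewrite -[inf_saturation _ _]setCK; apply: open_closedC.
apply/hd.2 => x NAx; have [e [e0 ball_e]] := open_inf_close_ball x r0.
exists e; split=> // z /ball_e xz [y Ay yz]; apply: NAx; exists y => //.
exact: inf_close_trans yz (inf_close_sym xz).
Qed.

Lemma cauchy_inf_bounded (F : set_system X) r :
  G_cauchy d F -> 0 < r -> exists2 A, F A & inf_bounded r A.
Proof.
move=> Fc /no_least_arc [e e0 er]; have [A [FA Ae]] := Fc e e0.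
by exists A => //; apply: inf_bounded_lt er Ae.
Qed.

End InfinitelyClose.

Lemma g_characteristic_gt0 (K : Type) (ltK : K -> K -> Prop)
  (G : porderZmodType) (l : option K -> G) :
  isotone_embedding ltK l -> g_characteristic l -> forall a, 0 < l (Some a).
Proof.
move=> [linj lmono] [lge0 [[a0 la0] _]] a.
have lN : l None = 0.
  by apply: le_anti; rewrite lge0 andbT -la0; apply: lmono; case: a0 {la0}.
by rewrite lt_def lge0 andbT -lN; apply/eqP => /linj.
Qed.

Theorem lemma2p58 (X : topologicalType)
  (hX : has_infinite_metrizable_gauge X)
  (K : Type) (ltK : K -> K -> Prop)
  (hK : regular_cardinal ltK) (hKMG : in_MG X ltK)
  (G : porderZmodType) (hG : is_loag G) (hGK : chi_arc_eq G ltK)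
  (d : X -> X -> G) (hd : in_Met d)
  (F : set_system X) (hF : ProperFilter F) (hFc : G_cauchy d F)
  (l : option K -> G) (hl : isotone_embedding ltK l)
  (hlc : g_characteristic l) :
  exists B : K -> set X,
    (forall a, F (B a)) /\
    (forall a, open (B a) /\ closed (B a)) /\
    (forall a x y, B a x -> B a y -> d x y <= l (Some a)) /\
    (forall a b, (a = b \/ ltK a b) -> B b `<=` B a).
Proof.
have no_least_arc (r : G) : 0 < r -> exists2 e, 0 < e & infinitely_smaller e r.
  exact: (exists_infinitely_smaller hG hGK hK.2.1).
have l_gt0 := g_characteristic_gt0 hl hlc.
have /choice [A hA] a : exists A, F A /\ inf_bounded d (l (Some a)) A.
  have [A FA Aa] := cauchy_inf_bounded hG no_least_arc hFc (l_gt0 a).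
  by exists A.
pose B a := inf_saturation d (l (Some a)) (A a).
have FB a : F (B a).
  exact: (filterS (sub_inf_saturation (A := A a) hd (l_gt0 a)) (hA a).1).
have B_bounded a : inf_bounded d (l (Some a)) (B a).
  exact: (inf_bounded_saturation hG hd (hA a).2).
exists B; split=> //; split.
  move=> a; split.
    exact: (open_inf_saturation hG hd no_least_arc (A a) (l_gt0 a)).
  exact: (closed_inf_saturation hG hd no_least_arc (l_gt0 a)).
split=> [a x y Bx By|a b ab].
  exact: inf_close_le (B_bounded a x y Bx By).
have [z [Baz Bbz]] := filter_ex (filterI (FB a) (FB b)).
apply: (inf_saturation_sup hG hd _ Bbz Baz).
exact: (inf_boundedW (hl.2 (Some a) (Some b) ab) (B_bounded b)).
Qed.
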